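(* Let $r\in\mathbb Z_n$, $1\le j\le\frac{n-1}2$, let $\mathbf w\ne0$ be a row vector with $\mathbf wZ=q^{2r}\mathbf w$, and write $\mathcal U_k=\mathcal U_k(q^j+q^{-j})$, $\mathcal L_k=\mathcal L_k(q^j+q^{-j})$. Set $\mathbf y_0=\mathbf w$, $\mathbf y_1=q^r\mathcal U_1\mathbf w+\mathbf w$, and $\mathbf y_k=q^{kr}(\mathcal U_k-\mathcal U_{k-2})\mathbf w+k\,q^{(k-1)r}\mathcal U_{k-1}\mathbf w$ for $2\le k\le n-1$. Then $\mathbf y_{j,r}=[\mathbf y_{n-1}\ \cdots\ \mathbf y_1\ \mathbf y_0]$ satisfies $$\mathbf y_{j,r}M=\lambda_{j,r}\mathbf y_{j,r}+\mathbf w_{j,r},\qquad \mathbf w_{j,r}=[q^{(n-1)r}\mathcal L_{n-1}\mathbf w\ \cdots\ q^r\mathcal L_1\mathbf w\ \ \mathbf w],$$ where $\lambda_{j,r}=q^r(q^j+q^{-j})$ and $\mathbf w_{j,r}$ is a left eigenvector of $M$ for $\lambda_{j,r}$.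
   Context: $n\ge3$ odd, $q$ a primitive $n$-th root of unity in $\mathbb C$. $I$ is the $n\times n$ identity, $Z$ the $n\times n$ cyclic permutation matrix with $(Zu)_i=u_{i+1}$ (indices mod $n$). $M$ is the $n^2\times n^2$ block matrix of $n\times n$ blocks $M_{ab}$ ($0\le a,b\le n-1$) with $M_{a,a+1}=I$ ($0\le a\le n-2$), $M_{a,a-1}=Z$ ($1\le a\le n-2$), $M_{n-1,0}=2I$, $M_{n-1,n-2}=2Z$, other blocks zero; row vectors of length $n^2$ are written as $n$ blocks matching this structure. $\mathcal U_k$: $\mathcal U_0=1$, $\mathcal U_1=t$, $\mathcal U_k=t\mathcal U_{k-1}-\mathcal U_{k-2}$. $\mathcal L_k$: $\mathcal L_0=2$, $\mathcal L_1=t$, $\mathcal L_k=t\mathcal L_{k-1}-\mathcal L_{k-2}$. *)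

From HB Require Import structures.
From mathcomp Require Import all_boot all_order all_algebra.
Unset Printing Implicit Defensive.
Import Order.TTheory GRing.Theory Num.Theory.
Local Open Scope ring_scope.

Fixpoint chebU {C : pzRingType} (k : nat) (t : C) : C :=
  match k with
  | 0 => 1
  | 1 => t
  | (k'.+1 as k1).+1 => t * chebU k1 t - chebU k' t
  end.

Fixpoint chebL {C : pzRingType} (k : nat) (t : C) : C :=
  match k with
  | 0 => 2%:R
  | 1 => t
  | (k'.+1 as k1).+1 => t * chebL k1 t - chebL k' t
  end.

(* Entries (row i, column c, 0-based nat indices) of the n x n identity
   and of the cyclic matrix Z with (Zu)_i = u_{i+1 mod n}, i.e. Z_{i,c} = [c = i+1 mod n]. *)
Definition Ient {C : pzRingType} (i c : nat) : C := (i == c)%:R.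
Definition Zent {C : pzRingType} (n i c : nat) : C := ((i.+1 %% n)%N == c)%:R.

Definition Zmx {C : pzRingType} (n : nat) : 'M[C]_n :=
  \matrix_(i < n, c < n) Zent n i c.

Definition Mblk {C : pzRingType} (n a b i c : nat) : C :=
  if (b == a.+1) && (a <= n - 2)%N then Ient i c
  else if [&& (1 <= a)%N, (a <= n - 2)%N & a == b.+1] then Zent n i c
  else if (a == n.-1) && (b == 0%N) then 2%:R * Ient i c
  else if (a == n.-1) && (b == n - 2)%N then 2%:R * Zent n i c
  else 0.

(* The n^2 x n^2 matrix M; global index k corresponds to block k / n, position k mod n
   (this agrees with mxvec_index i j = i * n + j). *)
Definition Mmx {C : pzRingType} (n : nat) : 'M[C]_(n * n) :=
  \matrix_(k < n * n, l < n * n) Mblk n (k %/ n)%N (l %/ n)%N (k %% n)%N (l %% n)%N.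

Definition blockrow {C : pzRingType} (n : nat) (B : nat -> 'rV[C]_n) : 'rV[C]_(n * n) :=
  mxvec (\matrix_(a < n, i < n) B a 0 i).

Definition yvec {C : unitRingType} (n j r : nat) (q : C) (w : 'rV[C]_n) (k : nat)
  : 'rV[C]_n :=
  let t := q ^+ j + q ^- j in
  match k with
  | 0 => w
  | 1 => (q ^+ r * chebU 1 t) *: w + w
  | k'.+1 => (q ^+ (k * r)%N * (chebU k t - chebU (k - 2)%N t)) *: w
             + (k%:R * q ^+ (k' * r)%N * chebU k' t) *: w
  end.

Definition yjr {C : unitRingType} (n j r : nat) (q : C) (w : 'rV[C]_n) : 'rV[C]_(n * n) :=
  blockrow n (fun a => yvec n j r q w (n.-1 - a)%N).

(* w_{j,r} = [q^{(n-1)r} L_{n-1} w ... q^r L_1 w  w]; block for index k >= 1 is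
   q^{kr} L_k w, and the last block (k = 0) is w itself (not L_0 w = 2w). *)
Definition wblk {C : unitRingType} (n j r : nat) (q : C) (w : 'rV[C]_n) (k : nat)
  : 'rV[C]_n :=
  match k with
  | 0 => w
  | _ => (q ^+ (k * r)%N * chebL k (q ^+ j + q ^- j)) *: w
  end.

Definition wjr {C : unitRingType} (n j r : nat) (q : C) (w : 'rV[C]_n) : 'rV[C]_(n * n) :=
  blockrow n (fun a => wblk n j r q w (n.-1 - a)%N).

(* Every vector occurring in the statement is a block row [c_{n-1} w ... c_1 w  c_0 w]
   whose blocks are scalar multiples of the eigenvector w of Z (w Z = z w, z = q^{2r}).
   On such rows M acts through an n x n scalar matrix: the blocks I, Z, 2I, 2Z of M
   become the scalars 1, z, 2, 2z.  Reading the blocks right to left (block a carries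
   the coefficient c_{n-1-a}), the coefficients of c M are
     c_1,  c_2 + 2z c_0,  c_{k+1} + z c_{k-1} (2 <= k <= n-2),  z c_{n-2} + 2 c_0,
   so an identity  c M = d  reduces to four scalar recurrences (eigen_recurrence).
   With t = q^j + q^-j and mu = q^r (so z = mu^2), the coefficients of y_{j,r} and
   w_{j,r} satisfy these recurrences by the Chebyshev relations U_{k+2} = t U_{k+1} - U_k
   and L_{k+2} = U_{k+2} - U_k; the wrap-around equation at k = n-1 holds because
   mu^n = 1, L_n(t) = 2 and U_{n-1}(t) = 0, which follow from the closed forms
   L_k(x + 1/x) = x^k + x^-k and U_k(x + 1/x)(x - 1/x) = x^{k+1} - x^{-k-1} at the
   n-th root of unity x = q^j, where x != 1/x since 0 < 2j < n. *)

From HB Require Import structures.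
From mathcomp Require Import all_boot all_order all_algebra.
From mathcomp Require Import zify ring.
Import Order.TTheory GRing.Theory Num.Theory.
Set Implicit Arguments.
Unset Strict Implicit.
Local Open Scope ring_scope.

Lemma index_allpairs (T1 T2 : eqType) (s1 : seq T1) (s2 : seq T2) x1 x2 :
  x1 \in s1 -> x2 \in s2 ->
  index (x1, x2) [seq (y1, y2) | y1 <- s1, y2 <- s2] =
    (index x1 s1 * size s2 + index x2 s2)%N.
Proof.
move=> + x2s2; elim: s1 => [|y s1 IH] //= x1s1; rewrite index_cat.
have [<-|neq] := eqVneq x1 y.
  have pair_inj : injective (pair x1 : T2 -> T1 * T2) by move=> a b [].
  by rewrite mem_map // x2s2 index_map // mul0n.
have -> : (x1, x2) \in [seq (y, y2) | y2 <- s2] = false.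
  by apply/negbTE/mapP => -[z _ [eq_x1 _]]; rewrite eq_x1 eqxx in neq.
rewrite size_map IH ?mulSn ?addnA //.
by move: x1s1; rewrite inE (negbTE neq).
Qed.

(* The entry (i, j) of an m x n matrix sits at position i * n + j of its mxvec;
   this is what makes the Mmx indexing by (k / n, k mod n) agree with blockrow. *)
Lemma mxvec_indexE m n (i : 'I_m) (j : 'I_n) :
  mxvec_index i j = (i * n + j)%N :> nat.
Proof.
rewrite /mxvec_index /=.
have -> : enum_rank (i, j) = index (i, j) (enum {: 'I_m * 'I_n}) :> nat.
  by rewrite -{2}[(i, j)](nth_enum_rank (i, j)) index_uniq ?enum_uniq // -cardE.
have -> : enum {: 'I_m * 'I_n} = [seq (x1, x2) | x1 <- enum 'I_m, x2 <- enum 'I_n].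
  by rewrite enumT unlock.
by rewrite index_allpairs ?mem_enum // !index_enum_ord size_enum_ord.
Qed.

Lemma mxvec_index_div n (a c : 'I_n) : (mxvec_index a c %/ n)%N = a.
Proof.
have n_gt0 : (0 < n)%N by case: n a c => [[]|].
by rewrite mxvec_indexE divnMDl // divn_small ?addn0.
Qed.

Lemma mxvec_index_mod n (a c : 'I_n) : (mxvec_index a c %% n)%N = c.
Proof. by rewrite mxvec_indexE modnMDl modn_small. Qed.

Lemma blockrowE (C : pzRingType) n (B : nat -> 'rV[C]_n) (a i : 'I_n) :
  blockrow n B 0 (mxvec_index a i) = B a 0 i.
Proof. by rewrite /blockrow mxvecE mxE. Qed.

Lemma eq_blockrow (C : pzRingType) n (B1 B2 : nat -> 'rV[C]_n) :
  (forall a : 'I_n, B1 a = B2 a) -> blockrow n B1 = blockrow n B2.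
Proof.
by move=> eqB; congr mxvec; apply/matrixP => a i; rewrite !mxE eqB.
Qed.

Lemma blockrow_comb (C : comPzRingType) n (w : 'rV[C]_n) (lam : C) (f g : nat -> C) :
  lam *: blockrow n (fun a => f a *: w) + blockrow n (fun a => g a *: w)
  = blockrow n (fun a => (lam * f a + g a) *: w).
Proof.
apply/rowP => l; case/mxvec_indexP: l => a i.
by rewrite !mxE !blockrowE !mxE mulrDl mulrA.
Qed.

Lemma blockrow_scale (C : comPzRingType) n (w : 'rV[C]_n) (lam : C) (f : nat -> C) :
  lam *: blockrow n (fun a => f a *: w) = blockrow n (fun a => (lam * f a) *: w).
Proof.
apply/rowP => l; case/mxvec_indexP: l => a i.
by rewrite !mxE !blockrowE !mxE mulrA.
Qed.

Lemma sum_select (C : pzRingType) n (F : nat -> C) (m : nat) (c : bool) (x : C) :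
  (c -> m < n)%N ->
  \sum_(a < n) F a * (if (a == m :> nat) && c then x else 0) = if c then F m * x else 0.
Proof.
case: c => [/(_ isT) m_lt_n | _]; last by rewrite big1 // => a _; rewrite andbF mulr0.
rewrite (bigD1 (Ordinal m_lt_n)) //= eqxx big1 ?addr0 // => a neq_am.
by rewrite andbT ifN ?mulr0 //; apply: contra neq_am => /eqP eq_am; apply/eqP/val_inj.
Qed.

Section BlockAction.
Variables (C : comPzRingType) (n : nat) (z : C) (w : 'rV[C]_n).
Hypothesis wZ : w *m Zmx n = z *: w.

(* The scalar to which the block M_{ab} (one of 0, I, Z, 2I, 2Z) reduces on w. *)
Definition blkcoef (a b : nat) : C :=
  if (b == a.+1) && (a <= n - 2)%N then 1
  else if [&& (1 <= a)%N, (a <= n - 2)%N & a == b.+1] then z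
  else if (a == n.-1) && (b == 0%N) then 2%:R
  else if (a == n.-1) && (b == n - 2)%N then 2%:R * z
  else 0.

Lemma mulIent (i : 'I_n) : \sum_(c < n) w 0 c * Ient c i = w 0 i.
Proof.
rewrite (bigD1 i) //= /Ient eqxx mulr1 big1 ?addr0 // => c neq_ci.
by rewrite (_ : (c == i :> nat) = false) ?mulr0 //; apply/negbTE.
Qed.

Lemma mulZent (i : 'I_n) : \sum_(c < n) w 0 c * Zent n c i = z * w 0 i.
Proof.
transitivity ((w *m Zmx n) 0 i); last by rewrite wZ mxE.
by rewrite mxE; apply: eq_bigr => c _; rewrite mxE.
Qed.

Lemma mulMblk (a b : nat) (i : 'I_n) :
  \sum_(c < n) w 0 c * Mblk n a b c i = blkcoef a b * w 0 i.
Proof.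
rewrite /Mblk /blkcoef.
case: ifP => _; first by rewrite mulIent mul1r.
case: ifP => _; first by rewrite mulZent.
case: ifP => _.
  by under eq_bigr => c _ do rewrite mulrCA; rewrite -mulr_sumr mulIent.
case: ifP => _.
  by under eq_bigr => c _ do rewrite mulrCA; rewrite -mulr_sumr mulZent mulrA.
by rewrite big1 ?mul0r // => c _; rewrite mulr0.
Qed.

Lemma blockrow_mulM (f : nat -> C) :
  blockrow n (fun a => f a *: w) *m Mmx n =
  blockrow n (fun b => (\sum_(a < n) f a * blkcoef a b) *: w).
Proof.
apply/rowP => l; case/mxvec_indexP: l => b i.
rewrite blockrowE !mxE (reindex _ (curry_mxvec_bij _ _)) /= mulr_suml.
transitivity (\sum_(a < n) \sum_(c < n) blockrow n (fun a => f a *: w) 0 (mxvec_index a c)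
    * Mmx n (mxvec_index a c) (mxvec_index b i)).
  by rewrite pair_bigA; apply: eq_bigr => -[].
apply: eq_bigr => a _.
under eq_bigr => c _ do rewrite blockrowE /Mmx !mxE !mxvec_index_div !mxvec_index_mod -mulrA.
by rewrite -mulr_sumr mulMblk mulrA.
Qed.

Hypothesis n_gt2 : (2 < n)%N.

Lemma blkcoef_rev (k' k : nat) : (k' < n)%N -> (k < n)%N ->
  blkcoef (n.-1 - k') (n.-1 - k) =
    (if (k' == k.+1) && (k < n.-1)%N then 1 else 0)
  + (if (k' == k.-1) && (1 < k)%N then z else 0)
  + (if (k' == 0%N) && (k == n.-1) then 2%:R else 0)
  + (if (k' == 0%N) && (k == 1%N) then 2%:R * z else 0).
Proof.
move=> k'_lt k_lt; rewrite /blkcoef.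
have [m n_eq] : exists m, n = m.+3 by exists (n - 3)%N; lia.
rewrite n_eq /= !subSS subn0 in k'_lt k_lt *.
have : (m.+2 - k' + k' = m.+2)%N /\ (m.+2 - k + k = m.+2)%N by lia.
move: (m.+2 - k')%N (m.+2 - k)%N => a b [a_eq b_eq]; clear k'_lt k_lt n_gt2 n_eq.
by repeat (case: ifP => ?; try by exfalso; lia); rewrite ?addr0 ?add0r.
Qed.

(* The reversed coefficient sequence of (g M) for the block row with reversed
   coefficients g: entries c_{k+1}, z c_{k-1}, 2 c_0 at k = n-1, 2z c_0 at k = 1. *)
Definition Mcoef (g : nat -> C) (k : nat) : C :=
    (if (k < n.-1)%N then g k.+1 else 0)
  + (if (1 < k)%N then g k.-1 * z else 0)
  + (if k == n.-1 then g 0%N * 2%:R else 0)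
  + (if k == 1%N then g 0%N * (2%:R * z) else 0).

Lemma blockrow_rev_mulM (g : nat -> C) :
  blockrow n (fun a => g (n.-1 - a)%N *: w) *m Mmx n =
  blockrow n (fun a => Mcoef g (n.-1 - a)%N *: w).
Proof.
rewrite blockrow_mulM; apply: eq_blockrow => b; congr (_ *: _).
have [k k_lt ->] : exists2 k, (k < n)%N & (b : nat) = (n.-1 - k)%N.
  by exists (n.-1 - b)%N; have := ltn_ord b; lia.
have revE (a : 'I_n) : g (n.-1 - rev_ord a)%N * blkcoef (rev_ord a) (n.-1 - k) =
    g a * ((if (a == k.+1 :> nat) && (k < n.-1)%N then 1 else 0)
  + (if (a == k.-1 :> nat) && (1 < k)%N then z else 0)
  + (if (a == 0%N :> nat) && (k == n.-1) then 2%:R else 0)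
  + (if (a == 0%N :> nat) && (k == 1%N) then 2%:R * z else 0)).
  have -> : (rev_ord a : nat) = (n.-1 - a)%N by have := ltn_ord a; rewrite /=; lia.
  by rewrite blkcoef_rev // (_ : (n.-1 - (n.-1 - a))%N = a) //; have := ltn_ord a; lia.
rewrite (reindex_inj rev_ord_inj) /=; under eq_bigr => a _ do rewrite revE !mulrDr.
rewrite (_ : (n.-1 - (n.-1 - k))%N = k); last by lia.
rewrite !big_split /= !sum_select ?mulr1 //; lia.
Qed.

Lemma eigen_recurrence (g h : nat -> C) :
  h 0%N = g 1%N ->
  h 1%N = g 2%N + 2%:R * z * g 0%N ->
  (forall k, (k.+3 < n)%N -> h k.+2 = g k.+3 + z * g k.+1) ->
  h n.-1 = z * g n.-2 + 2%:R * g 0%N ->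
  blockrow n (fun a => g (n.-1 - a)%N *: w) *m Mmx n =
  blockrow n (fun a => h (n.-1 - a)%N *: w).
Proof.
move=> h0 h1 hmid hlast; rewrite blockrow_rev_mulM; apply: eq_blockrow => b.
congr (_ *: _); have : (n.-1 - b < n)%N by have := ltn_ord b; lia.
move: (n.-1 - b)%N => k k_lt; rewrite /Mcoef.
have [-> | k_neq] := eqVneq k n.-1.
  by rewrite hlast; repeat case: ifP => ?; try lia; ring.
case: k k_lt k_neq => [|[|k]] k_lt k_neq /=;
  [rewrite h0 | rewrite h1 | rewrite hmid; last lia];
  by repeat case: ifP => ?; try lia; ring.
Qed.

End BlockAction.

(* The defining recurrences, as rewrite rules that do not unfold the lower terms. *)
Lemma chebU_rec (C : pzRingType) k (t : C) : chebU k.+2 t = t * chebU k.+1 t - chebU k t.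
Proof. by []. Qed.

Lemma chebL_rec (C : pzRingType) k (t : C) : chebL k.+2 t = t * chebL k.+1 t - chebL k t.
Proof. by []. Qed.

Lemma chebL_chebU (C : comPzRingType) k (t : C) : chebL k.+2 t = chebU k.+2 t - chebU k t.
Proof.
elim/ltn_ind: k => -[|[|k]] IH; try by rewrite /=; ring.
rewrite chebL_rec !IH // !(@chebU_rec _ k.+2) !(@chebU_rec _ k); ring.
Qed.

Lemma chebL_closed (C : fieldType) (x : C) k : x != 0 ->
  chebL k (x + x^-1) = x ^+ k + x ^- k.
Proof.
move=> x0; elim/ltn_ind: k => -[|[|k]] IH; try by rewrite /= ?expr0 ?invr1 ?expr1.
rewrite chebL_rec !IH // -!exprVn; apply/eqP; rewrite -subr_eq0; apply/eqP.
transitivity ((x * x^-1 - 1) * (x ^+ k + x^-1 ^+ k)); first by rewrite !exprS; ring.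
by rewrite mulfV // subrr mul0r.
Qed.

Lemma chebU_closed (C : fieldType) (x : C) k : x != 0 ->
  chebU k (x + x^-1) * (x - x^-1) = x ^+ k.+1 - x ^- k.+1.
Proof.
move=> x0; elim/ltn_ind: k => -[|[|k]] IH; first by rewrite /= mul1r expr1.
  by rewrite /= -exprVn; ring.
rewrite chebU_rec mulrBl -mulrA !IH // -!exprVn; apply/eqP; rewrite -subr_eq0; apply/eqP.
transitivity ((x * x^-1 - 1) * (x ^+ k.+1 - x^-1 ^+ k.+1)); first by rewrite !exprS; ring.
by rewrite mulfV // subrr mul0r.
Qed.

Lemma chebL_unity (C : fieldType) (x : C) n : x != 0 -> x ^+ n = 1 ->
  chebL n (x + x^-1) = 2%:R.
Proof. by move=> x0 xn; rewrite chebL_closed // xn invr1. Qed.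

Lemma chebU_unity (C : fieldType) (x : C) n : (0 < n)%N -> x != 0 -> x ^+ n = 1 ->
  x - x^-1 != 0 -> chebU n.-1 (x + x^-1) = 0.
Proof.
move=> n_gt0 x0 xn xVx; have := @chebU_closed _ x n.-1 x0; rewrite prednK // xn invr1 subrr.
by move/eqP; rewrite mulf_eq0 (negbTE xVx) orbF => /eqP.
Qed.

Lemma prim_root_sub_inv (C : fieldType) n (q : C) j : n.-primitive_root q ->
  (0 < j)%N -> (j.*2 < n)%N -> q ^+ j - q ^- j != 0.
Proof.
move=> prim_q j_gt0 j2_lt; apply/eqP => qj_eq.
have q0 : q != 0 by rewrite (prim_root_eq0 prim_q) -lt0n (prim_order_gt0 prim_q).
have : q ^+ j * (q ^+ j - q ^- j) == 0 by rewrite qj_eq mulr0.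
rewrite mulrBr mulfV ?expf_neq0 // subr_eq0 -exprD -(prim_order_dvd prim_q) addnn.
by move/dvdn_leq; rewrite double_gt0 => /(_ j_gt0); lia.
Qed.

Lemma cheb_prim_root (C : fieldType) n (q : C) j : n.-primitive_root q ->
  (0 < j)%N -> (j.*2 < n)%N ->
  chebL n (q ^+ j + q ^- j) = 2%:R /\ chebU n.-1 (q ^+ j + q ^- j) = 0.
Proof.
move=> prim_q j_gt0 j2_lt; have n_gt0 := prim_order_gt0 prim_q.
have qj0 : q ^+ j != 0 by rewrite expf_neq0 // (prim_root_eq0 prim_q) -lt0n.
have qj_n : (q ^+ j) ^+ n = 1 by rewrite -exprM mulnC exprM (prim_expr_order prim_q) expr1n.
split; first exact: chebL_unity.
by apply: chebU_unity => //; exact: prim_root_sub_inv prim_q j_gt0 j2_lt.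
Qed.

(* The coefficient sequences of y_{j,r} and w_{j,r}, for t = q^j + q^-j and mu = q^r;
   y_k = ycoef k *: w and (block k of w_{j,r}) = wcoef k *: w. *)
Section Coefficients.
Variables (C : comPzRingType) (t mu : C).

Definition ycoef (k : nat) : C :=
  match k with
  | 0 => 1
  | 1 => mu * chebU 1 t + 1
  | k'.+1 => mu ^+ k * (chebU k t - chebU (k - 2) t) + k%:R * mu ^+ k' * chebU k' t
  end.

Definition wcoef (k : nat) : C :=
  match k with
  | 0 => 1
  | _ => mu ^+ k * chebL k t
  end.

(* The recurrences of eigen_recurrence for g = ycoef, h = mu t ycoef + wcoef,
   z = mu^2; the wrap-around one needs mu^n = 1, L_n = 2 and U_{n-1} = 0. *)
Lemma ycoef_rec0 : mu * t * ycoef 0 + wcoef 0 = ycoef 1.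
Proof. by rewrite /=; ring. Qed.

Lemma ycoef_rec1 : mu * t * ycoef 1 + wcoef 1 = ycoef 2 + 2%:R * mu ^+ 2 * ycoef 0.
Proof. by rewrite /=; ring. Qed.

Lemma ycoef_rec k :
  mu * t * ycoef k.+2 + wcoef k.+2 = ycoef k.+3 + mu ^+ 2 * ycoef k.+1.
Proof.
case: k => [|k]; first by rewrite /=; ring.
rewrite /ycoef /wcoef !subSS !subn0 chebL_chebU.
by rewrite !(@chebU_rec _ k.+2) !(@chebU_rec _ k.+1) !(@chebU_rec _ k) !exprS; ring.
Qed.

Lemma ycoef_wrap n : (2 < n)%N -> mu ^+ n = 1 -> chebL n t = 2%:R -> chebU n.-1 t = 0 ->
  mu * t * ycoef n.-1 + wcoef n.-1 = mu ^+ 2 * ycoef n.-2 + 2%:R * ycoef 0.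
Proof.
case: n => [|[|[|m]]] // _ mu_n L_n U_n /=.
have y_n : ycoef m.+3 = 2%:R.
  by rewrite /ycoef !subSS subn0 U_n mulr0 addr0 -chebL_chebU L_n mu_n mul1r.
by rewrite ycoef_rec y_n /= mulr1 addrC.
Qed.

(* The same recurrences for g = wcoef, h = mu t wcoef: w_{j,r} is an eigenvector. *)
Lemma wcoef_rec0 : mu * t * wcoef 0 = wcoef 1.
Proof. by rewrite /=; ring. Qed.

Lemma wcoef_rec1 : mu * t * wcoef 1 = wcoef 2 + 2%:R * mu ^+ 2 * wcoef 0.
Proof. by rewrite /=; ring. Qed.

Lemma wcoef_rec k : mu * t * wcoef k.+2 = wcoef k.+3 + mu ^+ 2 * wcoef k.+1.
Proof. by rewrite /wcoef (@chebL_rec _ k.+1) !exprS; ring. Qed.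

Lemma wcoef_wrap n : (2 < n)%N -> mu ^+ n = 1 -> chebL n t = 2%:R ->
  mu * t * wcoef n.-1 = mu ^+ 2 * wcoef n.-2 + 2%:R * wcoef 0.
Proof.
case: n => [|[|[|m]]] // _ mu_n L_n /=.
have -> : mu * t * wcoef m.+2 = mu ^+ m.+3 * chebL m.+3 t + mu ^+ 2 * wcoef m.+1.
  by rewrite /wcoef (@chebL_rec _ m.+1) !exprS; ring.
by rewrite mu_n L_n /=; ring.
Qed.

End Coefficients.

Lemma yvecE (C : comUnitRingType) n j r (q : C) (w : 'rV[C]_n) k :
  yvec n j r q w k = ycoef (q ^+ j + q ^- j) (q ^+ r) k *: w.
Proof.
case: k => [|[|k]]; rewrite /yvec /ycoef ?scale1r ?scalerDl ?scale1r //.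
by rewrite -!exprM !(mulnC r).
Qed.

Lemma wblkE (C : comUnitRingType) n j r (q : C) (w : 'rV[C]_n) k :
  wblk n j r q w k = wcoef (q ^+ j + q ^- j) (q ^+ r) k *: w.
Proof. by case: k => [|k]; rewrite /wblk /wcoef ?scale1r // -exprM mulnC. Qed.

Lemma blockrow_eq0 (C : pzRingType) n (B : nat -> 'rV[C]_n) :
  blockrow n B = 0 -> forall a : 'I_n, B a = 0.
Proof.
move=> B0 a; apply/rowP => i.
by have := congr1 (fun v : 'rV_(n * n) => v 0 (mxvec_index a i)) B0; rewrite /= blockrowE !mxE.
Qed.

Theorem mainTheorem17 (C : numClosedFieldType) (n : nat) (q : C)
  (hn3 : (3 <= n)%N) (hodd : odd n) (hq : n.-primitive_root q)
  (r : 'I_n) (j : nat) (hj1 : (1 <= j)%N) (hj2 : (j <= n.-1./2)%N)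
  (w : 'rV[C]_n) (hw0 : w != 0) (hwZ : w *m Zmx n = q ^+ (2 * r)%N *: w) :
  let lam := q ^+ r * (q ^+ j + q ^- j) in
  yjr n j r q w *m Mmx n = lam *: yjr n j r q w + wjr n j r q w
  /\ (wjr n j r q w != 0 /\ wjr n j r q w *m Mmx n = lam *: wjr n j r q w).
Proof.
move=> lam; rewrite /lam; set t := q ^+ j + q ^- j; set mu := q ^+ r.
have mu_n : mu ^+ n = 1 by rewrite -exprM mulnC exprM (prim_expr_order hq) expr1n.
have [L_n U_n] : chebL n t = 2%:R /\ chebU n.-1 t = 0.
  by apply: cheb_prim_root => //; lia.
have wZ : w *m Zmx n = mu ^+ 2 *: w by rewrite hwZ -exprM mulnC.
have yE : yjr n j r q w = blockrow n (fun a => ycoef t mu (n.-1 - a) *: w).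
  by apply: eq_blockrow => a; rewrite yvecE.
have wE : wjr n j r q w = blockrow n (fun a => wcoef t mu (n.-1 - a) *: w).
  by apply: eq_blockrow => a; rewrite wblkE.
rewrite yE wE blockrow_comb blockrow_scale; split; last split.
- apply: (eigen_recurrence (h := fun k => mu * t * ycoef t mu k + wcoef t mu k) wZ hn3).
  + exact: ycoef_rec0.
  + exact: ycoef_rec1.
  + by move=> k _; apply: ycoef_rec.
  + exact: ycoef_wrap.
- (* the rightmost block of w_{j,r} is w itself *)
  have last_blk : (n.-1 < n)%N by lia.
  apply: contra hw0 => /eqP/blockrow_eq0/(_ (Ordinal last_blk)).
  by rewrite /= subnn scale1r => ->.
- apply: (eigen_recurrence (h := fun k => mu * t * wcoef t mu k) wZ hn3).
  + exact: wcoef_rec0.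
  + exact: wcoef_rec1.
  + by move=> k _; apply: wcoef_rec.
  + exact: wcoef_wrap.
Qed.
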